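(* Let $P=\{p_1,\dots,p_n\}$ be weighted points in $\mathbb{R}^2$ with total weight $1$, let $S=\{s_1,\dots,s_m\}$ be line segments in $\mathbb{R}^2$ of total length $1$, let $0<\delta$, and let $Q$ be the set of subsegments obtained from $S$ by the subdivision procedure described in the context. Let $G$ be the complete bipartite graph on $P\cup Q$ in which each $p\in P$ has supply $\|p\|$, each $q\in Q$ has demand equal to its length $\|q\|$, and the cost of edge $(p,q)$ is the Euclidean distance from $p$ to the closest point of $q$. Then the earth mover's distance between $P$ and $Q$ is at least the cost $\|\mathcal{W}\|$ of a minimum cost flow $\mathcal{W}$ in $G$ (a flow sending all supply to satisfy all demands).
   Context: Mass of each segment equals its length and is spread uniformly over it with density one. A transport plan from $P$ to a set of segments assigns to each point $p$ and each point $x$ of the segments a density $\tau_p(x)\in[0,1]$ such that each point $p$ sends total mass $\|p\|$ and each point $x$ of the segments receives total density $1$; its cost is $\sum_p\int\tau_p(x)\,\|p-x\|_2\,dx$; the earth mover's distance is the infimum of costs. Subdivision procedure: repeatedly, for each current subsegment $s'$: if there is a point of $P$ such that all of $s'$ lies within Euclidean distance $\delta/(nm)$ of it, leave $s'$ as is; otherwise, if there is a point $p\in P$ for which the ratio between the largest and smallest distance from $p$ to points of $s'$ exceeds $1+\delta$, cut $s'$ into two halves. The final set of subsegments is $Q$. *)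

From HB Require Import structures.
From mathcomp Require Import all_boot all_order all_algebra.
From mathcomp Require Import all_classical all_reals all_analysis.
Set Implicit Arguments. Unset Strict Implicit. Unset Printing Implicit Defensive.
Import Order.TTheory GRing.Theory Num.Theory.
Local Open Scope classical_set_scope.
Local Open Scope ring_scope.

Section Defs.
Variable R : realType.

Definition pt := (R * R)%type.
Definition seg := (pt * pt)%type.

Definition dist (x y : pt) : R :=
  Num.sqrt ((x.1 - y.1) ^+ 2 + (x.2 - y.2) ^+ 2).

Definition segpt (s : seg) (t : R) : pt :=
  (s.1.1 + t * (s.2.1 - s.1.1), s.1.2 + t * (s.2.2 - s.1.2)).

Definition seglen (s : seg) : R := dist s.1 s.2.

Definition dists (p : pt) (s : seg) : set R :=
  [set dist p (segpt s t) | t in `[(0:R), 1]%classic].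

Definition maxdist (p : pt) (s : seg) : R := sup (dists p s).
Definition mindist (p : pt) (s : seg) : R := inf (dists p s).

Definition half1 (s : seg) : seg :=
  (s.1, ((s.1.1 + s.2.1) / 2, (s.1.2 + s.2.2) / 2)).
Definition half2 (s : seg) : seg :=
  (((s.1.1 + s.2.1) / 2, (s.1.2 + s.2.2) / 2), s.2).

Definition near_point n (pos : 'I_n -> pt) (m : nat) (delta : R) (s : seg) :=
  exists i : 'I_n, forall t, t \in `[0, 1] ->
    dist (pos i) (segpt s t) <= delta / (n * m)%:R.

(* second test: ratio largest/smallest distance from some p exceeds 1+delta
   (stated multiplicatively: max > (1 + delta) * min) *)
Definition bad_ratio n (pos : 'I_n -> pt) (delta : R) (s : seg) :=
  exists i : 'I_n, maxdist (pos i) s > (1 + delta) * mindist (pos i) s.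

(* subdiv s Q : running the procedure from the single subsegment s
   terminates with the list Q of final subsegments *)
Inductive subdiv n (pos : 'I_n -> pt) (m : nat) (delta : R) : seg -> seq seg -> Prop :=
| subdiv_keep_near s : near_point pos m delta s -> subdiv pos m delta s [:: s]
| subdiv_keep_ok s : ~ near_point pos m delta s -> ~ bad_ratio pos delta s ->
    subdiv pos m delta s [:: s]
| subdiv_cut s Q1 Q2 : ~ near_point pos m delta s -> bad_ratio pos delta s ->
    subdiv pos m delta (half1 s) Q1 -> subdiv pos m delta (half2 s) Q2 ->
    subdiv pos m delta s (Q1 ++ Q2).

Definition subdivision n (pos : 'I_n -> pt) m (S : 'I_m -> seg) (delta : R)
    (Q : seq seg) :=
  exists Qs : 'I_m -> seq seg,
    (forall j, subdiv pos m delta (S j) (Qs j)) /\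
    Q = flatten [seq Qs j | j <- enum 'I_m].

Definition segQ (Q : seq seg) (j : 'I_(size Q)) : seg := nth (0, 0, (0, 0)) Q j.

(* tau i j t = density sent from point i to the point segpt (Q_j) t;
   dx = seglen Q_j * dt on segment j *)
Definition is_plan n (w : 'I_n -> R) (Q : seq seg)
    (tau : 'I_n -> 'I_(size Q) -> R -> R) :=
  [/\ (forall i j, measurable_fun `[(0:R), 1]%classic (tau i j)),
      (forall i j t, t \in `[0, 1] -> 0 <= tau i j t <= 1),
      (forall j t, t \in `[0, 1] -> \sum_i tau i j t = 1) &
      (forall i, \sum_j seglen (segQ j) *
           Rintegral lebesgue_measure `[(0:R), 1]%classic (tau i j) = w i)].

Definition plan_cost n (pos : 'I_n -> pt) (Q : seq seg)
    (tau : 'I_n -> 'I_(size Q) -> R -> R) : R :=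
  \sum_i \sum_j seglen (segQ j) *
    Rintegral lebesgue_measure `[(0:R), 1]%classic
      (fun t => tau i j t * dist (pos i) (segpt (segQ j) t)).

Definition emd n (pos : 'I_n -> pt) (w : 'I_n -> R) (Q : seq seg) : R :=
  inf [set c | exists tau : 'I_n -> 'I_(size Q) -> R -> R,
    is_plan w tau /\ c = plan_cost pos tau].

Definition is_flow n (w : 'I_n -> R) (Q : seq seg) (f : 'I_n -> 'I_(size Q) -> R) :=
  [/\ (forall i j, 0 <= f i j),
      (forall i, \sum_j f i j = w i) &
      (forall j, \sum_i f i j = seglen (segQ j))].

Definition flow_cost n (pos : 'I_n -> pt) (Q : seq seg)
    (f : 'I_n -> 'I_(size Q) -> R) : R :=
  \sum_i \sum_j f i j * mindist (pos i) (segQ j).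

Definition is_min_flow n (pos : 'I_n -> pt) (w : 'I_n -> R) (Q : seq seg)
    (f : 'I_n -> 'I_(size Q) -> R) :=
  is_flow w f /\ forall g : 'I_n -> 'I_(size Q) -> R, is_flow w g -> flow_cost pos f <= flow_cost pos g.

End Defs.

From HB Require Import structures.
From mathcomp Require Import all_boot all_order all_algebra.
From mathcomp Require Import all_classical all_reals all_analysis.
From mathcomp Require Import ring.
Import Order.TTheory GRing.Theory Num.Theory.
Import numFieldNormedType.Exports.
Set Implicit Arguments. Unset Strict Implicit. Unset Printing Implicit Defensive.
Local Open Scope classical_set_scope.
Local Open Scope ring_scope.

(* A transport plan tau induces the flow f_ij = |q_j| * int_0^1 tau_ij, which
   meets every supply and every demand.  As the edge cost mindist(p_i, q_j) is
   at most the distance from p_i to any point of q_j, this flow costs no more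
   than the plan, so every plan costs at least a minimum cost flow; the latter
   exists because the feasible flows form a nonempty compact polytope.
   Subdivision halves segments and hence preserves total length, which makes
   the uniform plan tau_ij = w_i admissible: the infimum defining the earth
   mover's distance is taken over a nonempty set. *)

Lemma continuous_sum (T : topologicalType) (R : realType) (I : Type) (s : seq I)
    (F : I -> T -> R) :
  (forall i, continuous (F i)) -> continuous (fun x => \sum_(i <- s) F i x).
Proof.
move=> contF; elim: s => [|i s IHs].
  rewrite (_ : (fun x => _) = cst 0); first exact: cst_continuous.
  by apply/funext => x; rewrite big_nil.
rewrite (_ : (fun x => _) = F i + fun x => \sum_(j <- s) F j x).
  by move=> x; apply: continuousD; [exact: contF | exact: IHs].
by apply/funext => x; rewrite big_cons.
Qed.

Section Transport.
Variables (R : realType) (n k : nat) (w : 'I_n -> R) (d : 'I_k -> R).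

Definition is_transport (f : 'I_n -> 'I_k -> R) :=
  [/\ (forall i j, 0 <= f i j), (forall i, \sum_j f i j = w i) &
      (forall j, \sum_i f i j = d j)].

Definition transport_cost (c f : 'I_n -> 'I_k -> R) :=
  \sum_i \sum_j f i j * c i j.

Lemma transport_le_supply f i j : is_transport f -> f i j <= w i.
Proof.
case=> f_ge0 f_row _; rewrite -f_row (bigD1 j) //= lerDl.
exact: sumr_ge0.
Qed.

(* Flows are coordinatized by row vectors, where closed boxes are compact. *)
Definition vec_flow (v : 'rV[R]_(n * k)) i j := v ord0 (mxvec_index i j).

Lemma vec_flowK f : vec_flow (mxvec (\matrix_(i, j) f i j)) = f.
Proof.
apply/funext => i; apply/funext => j.
by rewrite /vec_flow -[ord0]/(0 : 'I_1) mxvecE mxE.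
Qed.

Lemma continuous_vec_flow i j : continuous (fun v => vec_flow v i j).
Proof. exact: coord_continuous. Qed.

Lemma closed_transport : closed [set v | is_transport (vec_flow v)].
Proof.
have -> : [set v | is_transport (vec_flow v)] =
    \bigcap_(p in [set: 'I_n * 'I_k]) [set v | 0 <= vec_flow v p.1 p.2] `&`
    \bigcap_(i in [set: 'I_n]) [set v | \sum_j vec_flow v i j = w i] `&`
    \bigcap_(j in [set: 'I_k]) [set v | \sum_i vec_flow v i j = d j].
  apply/seteqP; split => [v [f_ge0 f_row f_col]|v [[f_ge0 f_row] f_col]].
    split; first split.
    - by move=> [i j] _; exact: f_ge0.
    - by move=> i _; exact: f_row.
    - by move=> j _; exact: f_col.
  split.
  - by move=> i j; exact: (f_ge0 (i, j)).
  - by move=> i; exact: f_row.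
  - by move=> j; exact: f_col.
have closed_preimage (f : 'rV[R]_(n * k) -> R) D :
    continuous f -> closed D -> closed (f @^-1` D).
  by move=> f_cont; apply: preimage_closed => v _; exact: f_cont.
apply: closedI; first apply: closedI.
- apply: closed_bigI => -[i j] _.
  apply: (closed_preimage _ [set x | 0 <= x]); last exact: closed_ge.
  exact: continuous_vec_flow.
- apply: closed_bigI => i _.
  apply: (closed_preimage _ [set x | x = w i]); last exact: closed_eq.
  by apply: continuous_sum => j; exact: continuous_vec_flow.
- apply: closed_bigI => j _.
  apply: (closed_preimage _ [set x | x = d j]); last exact: closed_eq.
  by apply: continuous_sum => i; exact: continuous_vec_flow.
Qed.

Lemma compact_transport : compact [set v | is_transport (vec_flow v)].
Proof.
pose M := \sum_i `|w i|.
apply: (subclosed_compact closed_transport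
  (rV_compact (fun=> @segment_compact R 0 M))).
move=> v fv l; case: (mxvec_indexP l) => i j /=; rewrite in_itv /=.
have [f_ge0 _ _] := fv; rewrite f_ge0 /=.
apply: le_trans (transport_le_supply i j fv) _; apply: le_trans (ler_norm _) _.
by rewrite /M (bigD1 i) //= lerDl sumr_ge0.
Qed.

Lemma transport_min_exists (c : 'I_n -> 'I_k -> R) :
  (exists f, is_transport f) ->
  exists2 W, is_transport W &
    forall f, is_transport f -> transport_cost c W <= transport_cost c f.
Proof.
move=> [f0 f0_tr].
have cost_cont : continuous (fun v => transport_cost c (vec_flow v)).
  apply: continuous_sum => i; apply: continuous_sum => j v.
  by apply: continuousM; [exact: continuous_vec_flow | exact: cst_continuous].
have nonempty : [set v | is_transport (vec_flow v)] !=set0.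
  by exists (mxvec (\matrix_(i, j) f0 i j)); rewrite /= vec_flowK.
have [v /set_mem v_tr v_min] :=
  compact_EVT_min nonempty compact_transport (continuous_subspaceT cost_cont).
exists (vec_flow v) => // f f_tr.
have := v_min (mxvec (\matrix_(i, j) f i j)); rewrite vec_flowK; apply.
by rewrite inE /= vec_flowK.
Qed.

End Transport.

Section Segments.
Variable R : realType.
Implicit Types (p : pt R) (s : seg R).

Lemma continuous_dist_segpt p s : continuous (fun t => dist p (segpt s t)).
Proof.
(* Squares are spelled as products, to which cvgM applies. *)
pose sq (x : R) := x * x.
have inner : continuous (fun t : R =>
    sq (p.1 - (s.1.1 + t * (s.2.1 - s.1.1))) +
    sq (p.2 - (s.1.2 + t * (s.2.2 - s.1.2)))).
  by move=> t; do ![apply: cvgD | apply: cvgN | apply: cvgM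
                  | exact: cvg_cst | exact: cvg_id].
move=> t; rewrite /dist /segpt /=.
by apply: (continuous_comp (inner t)); exact: sqrt_continuous.
Qed.

Lemma mindist_le_dist p s t :
  t \in `[0, 1] -> mindist p s <= dist p (segpt s t).
Proof.
move=> t01; apply: ge_inf; last by exists t.
by exists 0 => _ [u _ <-]; exact: sqrtr_ge0.
Qed.

Lemma seglen_ge0 s : 0 <= seglen s.
Proof. exact: sqrtr_ge0. Qed.

Lemma seglen_half s :
  seglen (half1 s) = seglen s / 2 /\ seglen (half2 s) = seglen s / 2.
Proof.
have sqrt_quarter (a : R) : Num.sqrt (2^-1 ^+ 2 * a) = Num.sqrt a / 2.
  by rewrite sqrtrM ?sqr_ge0 // sqrtr_sqr ger0_norm // mulrC.
by rewrite /seglen /dist /=; split; rewrite -sqrt_quarter; congr Num.sqrt; field.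
Qed.

Lemma subdiv_seglen n (pos : 'I_n -> pt R) m delta s Qs :
  subdiv pos m delta s Qs -> \sum_(q <- Qs) seglen q = seglen s.
Proof.
elim=> [{}s _|{}s _ _|{}s Q1 Q2 _ _ _ IH1 _ IH2]; rewrite ?big_seq1 //.
by rewrite big_cat /= IH1 IH2; have [-> ->] := seglen_half s; rewrite -splitr.
Qed.

Lemma subdivision_seglen n (pos : 'I_n -> pt R) m (S : 'I_m -> seg R) delta Q :
  subdivision pos S delta Q ->
  \sum_(j < size Q) seglen (segQ j) = \sum_j seglen (S j).
Proof.
move=> [Qs [subdivQs eqQ]].
have -> : \sum_(j < size Q) seglen (segQ j) = \sum_(q <- Q) seglen q.
  by rewrite (big_nth (0, 0, (0, 0))) big_mkord.
rewrite eqQ big_flatten /= big_map big_enum /=.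
by apply: eq_bigr => j _; exact: subdiv_seglen.
Qed.

End Segments.

Lemma Rintegral_sum d (T : measurableType d) (R : realType)
    (mu : {measure set T -> \bar R}) (D : set T) (I : Type) (s : seq I)
    (f : I -> T -> R) :
  measurable D -> (forall i, mu.-integrable D (EFin \o f i)) ->
  \int[mu]_(x in D) (\sum_(i <- s) f i x) =
  \sum_(i <- s) \int[mu]_(x in D) f i x.
Proof.
move=> mD f_int; elim: s => [|i s IHs].
  under eq_Rintegral do rewrite big_nil.
  by rewrite Rintegral_cst // mul0r big_nil.
under eq_Rintegral do rewrite big_cons.
rewrite RintegralD // ?IHs ?big_cons //.
have := integrable_sum mD s (P := xpredT) (fun i _ => f_int i).
by apply: eq_integrable => // x _; rewrite /= sumEFin.
Qed.

Section UnitInterval.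
Variable R : realType.
Local Notation mu := (@lebesgue_measure R).
Local Notation I01 := (`[(0:R), 1]%classic).
Implicit Types f g : R -> R.

Lemma lebesgue_measure_I01 : fine (mu I01) = 1.
Proof. by rewrite lebesgue_measure_itv /= lte_fin ltr01 /= subr0. Qed.

Lemma bounded_I01 f M :
  (forall t, I01 t -> `|f t| <= M) -> [bounded f t | t in I01].
Proof.
move=> f_le; exists M; split; first exact: num_real.
by move=> N /ltW MN t /f_le /le_trans; apply.
Qed.

Lemma integrable_I01 f M : measurable_fun I01 f ->
  (forall t, I01 t -> `|f t| <= M) -> mu.-integrable I01 (EFin \o f).
Proof.
move=> f_meas f_le; apply: measurable_bounded_integrable => //.
- exact: compact_finite_measure (@segment_compact R 0 1).
- exact: bounded_I01 f_le.
Qed.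

Lemma integrable_I01M f g M : measurable_fun I01 f ->
    (forall t, I01 t -> `|f t| <= M) -> continuous g ->
  mu.-integrable I01 (EFin \o (fun t => f t * g t)).
Proof.
move=> f_meas f_le g_cont.
have g_int : mu.-integrable I01 (EFin \o g).
  apply: continuous_compact_integrable; first exact: segment_compact.
  exact: continuous_subspaceT.
have mI : measurable (I01 : set (measurableTypeR R)) by exact: measurable_itv.
have := integrableMl mI g_int f_meas (bounded_I01 f_le).
by apply: eq_integrable => // t _; rewrite /= -EFinM mulrC.
Qed.

End UnitInterval.

Section Plans.
Variables (R : realType) (n : nat) (pos : 'I_n -> pt R) (w : 'I_n -> R).
Variable Q : seq (seg R).
Local Notation mu := (@lebesgue_measure R).
Local Notation I01 := (`[(0:R), 1]%classic).
Implicit Type tau : 'I_n -> 'I_(size Q) -> R -> R.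

Definition plan_flow tau i (j : 'I_(size Q)) :=
  seglen (segQ j) * \int[mu]_(t in I01) tau i j t.

Lemma integrable_plan tau i j :
  is_plan w tau -> mu.-integrable I01 (EFin \o tau i j).
Proof.
case=> tau_meas tau01 _ _; apply: (integrable_I01 (M := 1)) => // t t01.
by have /andP[tau_ge0 tau_le1] := tau01 i j t t01; rewrite ger0_norm.
Qed.

Lemma is_flow_plan_flow tau : is_plan w tau -> is_flow w (plan_flow tau).
Proof.
move=> tau_plan; have [_ tau01 tau_col tau_row] := tau_plan; split => // [i j|j].
  rewrite mulr_ge0 ?seglen_ge0 // Rintegral_ge0 // => t t01.
  by have /andP[] := tau01 i j t t01.
rewrite /plan_flow -mulr_sumr -Rintegral_sum //; last first.
  by move=> i; exact: integrable_plan.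
rewrite (@eq_Rintegral _ _ _ _ _ (fun=> 1)); last first.
  by move=> t /set_mem t01; exact: tau_col.
by rewrite Rintegral_cst // lebesgue_measure_I01 !mulr1.
Qed.

Lemma flow_cost_plan_flow tau :
  is_plan w tau -> flow_cost pos (plan_flow tau) <= plan_cost pos tau.
Proof.
move=> tau_plan; have [tau_meas tau01 _ _] := tau_plan.
apply: ler_sum => i _; apply: ler_sum => j _.
rewrite /plan_flow -mulrA ler_wpM2l ?seglen_ge0 //.
have tau_le1 t : I01 t -> `|tau i j t| <= 1.
  by move=> /(tau01 i j) /andP[tau_ge0 tau_le1]; rewrite ger0_norm.
rewrite -RintegralZr ?(integrable_plan i j tau_plan) //.
apply: le_Rintegral => //.
- apply: integrable_I01M (tau_meas i j) tau_le1 _; exact: cst_continuous.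
- apply: integrable_I01M (tau_meas i j) tau_le1 _; exact: continuous_dist_segpt.
- move=> t t01; have /andP[tau_ge0 _] := tau01 i j t t01.
  by rewrite ler_wpM2l // mindist_le_dist.
Qed.

Definition uniform_plan i (j : 'I_(size Q)) (t : R) := w i.

Lemma is_plan_uniform : (forall i, 0 <= w i) -> \sum_i w i = 1 ->
  \sum_(j < size Q) seglen (segQ j) = 1 -> is_plan w uniform_plan.
Proof.
move=> w_ge0 w_sum Q_len; split => // [i j|i j t _|i].
- exact: measurable_cst.
- by rewrite w_ge0 -w_sum (bigD1 i) //= lerDl sumr_ge0.
- under eq_bigr do rewrite Rintegral_cst // lebesgue_measure_I01 mulr1.
  by rewrite -mulr_suml Q_len mul1r.
Qed.

End Plans.

Theorem lemma1 (R : realType) (n m : nat) (pos : 'I_n -> pt R) (w : 'I_n -> R)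
  (S : 'I_m -> seg R) (delta : R) (Q : seq (seg R)) :
  (forall i, 0 < w i) -> \sum_i w i = 1 ->
  \sum_j seglen (S j) = 1 ->
  0 < delta ->
  subdivision pos S delta Q ->
  exists W : 'I_n -> 'I_(size Q) -> R,
    is_min_flow pos w W /\ flow_cost pos W <= emd pos w Q.
Proof.
move=> w_gt0 w_sum S_len _ subdivQ.
have Q_len : \sum_(j < size Q) seglen (segQ j) = 1.
  by rewrite (subdivision_seglen subdivQ).
have uniform := is_plan_uniform (fun i => ltW (w_gt0 i)) w_sum Q_len.
have [W W_flow W_min] := transport_min_exists
  (fun i j => mindist (pos i) (segQ j))
  (ex_intro _ _ (is_flow_plan_flow uniform)).
exists W; split; first by split.
apply: lb_le_inf.
  by exists (plan_cost pos (uniform_plan w (Q := Q))), (uniform_plan w (Q := Q)).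
move=> _ [tau [tau_plan ->]].
exact: le_trans (W_min _ (is_flow_plan_flow tau_plan))
               (flow_cost_plan_flow pos tau_plan).
Qed.
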